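(* Let $q\geq 2$ be an integer and let $\lambda\in\{0,\ldots,q-1\}$. Then for every $a\in\mathbb{N}$, $$u_q(aq+\lambda)=q\,u_q(a)+(\lambda+1-q)w_q(a)+\frac{q}{2}a^2+\left(\lambda+1-\frac{q}{2}\right)a = q\,u_q(a)+(\lambda+1-q)w_q(a)+q\frac{a(a+1)}{2}+(\lambda+1-q)a.$$
   Context: For an integer $q\geq 2$ and $n\in\mathbb{N}=\{0,1,2,\ldots\}$: $v_q(0)=0$ and, for $n>0$, $v_q(n)=\max\{k\in\mathbb{N}: q^k \text{ divides } n\}$; $w_q(n)=\sum_{i=0}^n v_q(i)$; $u_q(n)=\sum_{i=0}^n w_q(i)$. *)

From mathcomp Require Import all_boot all_order all_algebra.
Set Implicit Arguments. Unset Strict Implicit. Unset Printing Implicit Defensive.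

(* v_q(n): 0 if n = 0, else the largest k with q^k | n.
   For q >= 2 and n > 0, any such k satisfies k <= n (q^k > k),
   so the maximum over k < n.+1 is the maximum over all of N. *)
Definition vq (q n : nat) : nat :=
  if n == 0 then 0 else \max_(k < n.+1 | q ^ k %| n) k.

Definition wq (q n : nat) : nat := \sum_(0 <= i < n.+1) vq q i.
Definition uq (q n : nat) : nat := \sum_(0 <= i < n.+1) wq q i.

From mathcomp Require Import all_boot all_order all_algebra.
From mathcomp Require Import zify ring.
Set Implicit Arguments. Unset Strict Implicit.
Import GRing.Theory.

(* Among aq, ..., aq + q - 1 only aq has a positive valuation, namely
   v_q(a) + 1; hence w_q(aq + r) = a + w_q(a) for r < q, and summing these
   blocks of length q gives u_q(aq + lambda) in closed form. *)

Lemma vq_dvdn (q n : nat) : q ^ vq q n %| n.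
Proof.
rewrite /vq; case: eqP => [_|_]; first exact: dvd1n.
have P0 : q ^ (@ord0 n) %| n by rewrite expn0 dvd1n.
by rewrite (bigmax_eq_arg ord0 P0); case: arg_maxnP.
Qed.

Lemma dvdn_leq_vq (q n k : nat) : 1 < q -> 0 < n -> q ^ k %| n -> k <= vq q n.
Proof.
move=> q_gt1 n_gt0 dvd_k; rewrite /vq gtn_eqF //.
have k_lt : k < n.+1.
  by rewrite ltnS ltnW // (leq_trans (ltn_expl k q_gt1)) // dvdn_leq.
exact: (leq_bigmax_cond (Ordinal k_lt)).
Qed.

Lemma vq_mulr (q n : nat) : 1 < q -> 0 < n -> vq q (n * q) = (vq q n).+1.
Proof.
move=> q_gt1 n_gt0; have q_gt0 := ltnW q_gt1.
apply/eqP; rewrite eqn_leq; apply/andP; split; last first.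
  by rewrite dvdn_leq_vq ?muln_gt0 ?n_gt0 // expnSr dvdn_mul ?vq_dvdn.
have := vq_dvdn q (n * q); case: (vq q (n * q)) => // k.
by rewrite expnSr dvdn_pmul2r // => /(dvdn_leq_vq q_gt1 n_gt0).
Qed.

Lemma vq_eq0 (q n : nat) : ~~ (q %| n) -> vq q n = 0.
Proof.
apply: contraNeq; have := vq_dvdn q n; case: (vq q n) => // k dvd_k _.
by apply: dvdn_trans dvd_k; rewrite expnS dvdn_mulr.
Qed.

Lemma vq_mul_add (q a r : nat) : 0 < r < q -> vq q (a * q + r) = 0.
Proof.
case/andP=> r_gt0 r_lt; apply: vq_eq0.
by rewrite dvdn_addr ?dvdn_mull // gtnNdvd.
Qed.

Lemma wqS (q n : nat) : wq q n.+1 = wq q n + vq q n.+1.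
Proof. by rewrite /wq big_nat_recr. Qed.

Lemma wq_mul_add (q a r : nat) : 1 < q -> r < q -> wq q (a * q + r) = a + wq q a.
Proof.
move=> q_gt1; have q_gt0 := ltnW q_gt1.
have wq_block_tail b s : s < q -> wq q (b * q + s) = wq q (b * q).
  elim: s => [|s IHs] s_lt; first by rewrite addn0.
  by rewrite addnS wqS -addnS vq_mul_add ?s_lt // addn0 IHs // ltnW.
move=> /wq_block_tail ->; elim: a => [|a IHa]; first by rewrite /wq big_nat1.
have succ : a.+1 * q = (a * q + q.-1).+1 by rewrite mulSn; lia.
rewrite {1}succ wqS -succ wq_block_tail ?ltn_predL // IHa vq_mulr // wqS; lia.
Qed.

Lemma uq_mul_add (q a r : nat) : 1 < q -> r < q ->
  uq q (a * q + r) + q * (a + wq q a)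
  = q * (uq q a + 'C(a.+1, 2)) + r.+1 * (a + wq q a).
Proof.
move=> q_gt1 r_lt.
have blocks : \sum_(0 <= i < a * q) wq q i = q * ('C(a, 2) + \sum_(0 <= b < a) wq q b).
  rewrite big_nat_mul -bin2_sum -big_split big_distrr /=; apply: eq_bigr => b _.
  rewrite -[X in \sum_(X <= _ < _) _]add0n big_addn mulSn addnK.
  under eq_big_nat => j /andP[_ j_lt] do rewrite addnC wq_mul_add //.
  by rewrite sum_nat_const_nat subn0.
have tail : \sum_(a * q <= i < a * q + r.+1) wq q i = r.+1 * (a + wq q a).
  rewrite -[X in \sum_(X <= _ < _) _]add0n big_addn addKn.
  under eq_big_nat => j /andP[_ j_lt] do rewrite addnC wq_mul_add ?(leq_trans j_lt) //.
  by rewrite sum_nat_const_nat subn0.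
rewrite /uq -addnS (@big_cat_nat _ _ _ (a * q)) ?leq_addr //= blocks tail.
rewrite big_nat_recr //= binS bin1; lia.
Qed.

Local Open Scope ring_scope.

Lemma natr_binS2 (R : numFieldType) (n : nat) :
  'C(n.+1, 2)%:R = n%:R * (n%:R + 1) / 2 :> R.
Proof.
have : (2 * 'C(n.+1, 2) = n * (n + 1))%N by rewrite addn1 -mul_bin_diag bin1 mulnC.
move=> /(congr1 (GRing.natmul (1 : R))); rewrite !natrM natrD => <-.
by field.
Qed.

Theorem lemma2p2 (q lambda a : nat) (hq : (2 <= q)%N) (hl : (lambda < q)%N) :
  let Q := q%:R : rat in
  let L := lambda%:R : rat in
  let A := a%:R : rat in
  ((uq q (a * q + lambda))%:R : rat)
    = Q * (uq q a)%:R + (L + 1 - Q) * (wq q a)%:R + Q / 2 * A ^+ 2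
      + (L + 1 - Q / 2) * A
  /\
  ((uq q (a * q + lambda))%:R : rat)
    = Q * (uq q a)%:R + (L + 1 - Q) * (wq q a)%:R + Q * (A * (A + 1) / 2)
      + (L + 1 - Q) * A.
Proof.
move=> Q L A.
have := congr1 (GRing.natmul (1 : rat)) (uq_mul_add a hq hl).
(* Abstract the binomial, otherwise natrD unfolds 'C(a.+1, 2) by computation. *)
move: 'C(a.+1, 2) (natr_binS2 rat a) => C binC.
rewrite !(natrD, natrM) binC -addn1 natrD -/Q -/L -/A => E.
by split; apply: (addIr (Q * (A + (wq q a)%:R))); rewrite E; field.
Qed.
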